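(* For every $\epsilon>0$ there exists a constant $c_1>0$ with the following property. For each $v\in V$, each $w\in E^*$ with $i(w)=v$, each $k\ge1$ and each $y\in\Sigma_Y^*\setminus\{\emptyset\}$: $$c_1^{-1}m^{k(\eta(v,x_w,y_w)-\epsilon)}\le N_{k+|w|}\big(\pi(X_v\cap\psi_w((0,1)^2))\big)\le c_1m^{k(\eta(v,x_w,y_w)+\epsilon)},$$ and, whenever $\pi(X_v\cap\psi_w((0,1)^2))\cap\phi_w(I_y)\neq\emptyset$, $$c_1^{-1}m^{k(\theta(v,x_w,y_w,y)-\epsilon)}\le N_{k+|w|+|y|}\big(\pi(X_v\cap\psi_w((0,1)^2))\cap\phi_w(I_y)\big)\le c_1m^{k(\theta(v,x_w,y_w,y)+\epsilon)}.$$
   Context: Let $G=(V,E)$ be a finite directed graph (loops and multiple edges allowed), with initial/terminal vertex maps $i,t$, where every vertex has an outgoing edge. Fix positive integers $n>m$ and for each $e\in E$ a pair $(x_e,y_e)\in\{0,\dots,n-1\}\times\{0,\dots,m-1\}$. Let $\psi_e(\xi_1,\xi_2)=((\xi_1+x_e)/n,(\xi_2+y_e)/m)$. Then $\{X_v\}$ is the unique family of nonempty compact subsets of $[0,1]^2$ with $X_v=\bigcup_{e:\,i(e)=v}\psi_e(X_{t(e)})$. No separation condition is assumed. $E^*$ is the set of finite admissible words $w=w_1\cdots w_k$ ($t(w_j)=i(w_{j+1})$), including the empty word. $|w|$ is the length, $i(w)=i(w_1)$, $t(w)=t(w_k)$, $\psi_w=\psi_{w_1}\circ\cdots\circ\psi_{w_k}$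 ($\psi_\emptyset=\mathrm{id}$), $x_w=x_{w_1}\cdots x_{w_k}$, $y_w=y_{w_1}\cdots y_{w_k}$. $\Sigma_X=\{0,\dots,n-1\}$, $\Sigma_Y=\{0,\dots,m-1\}$, $\Sigma_Y^*$ is the set of finite words over $\Sigma_Y$ including $\emptyset$. $\pi(\xi_1,\xi_2)=\xi_2$, $\phi_e(s)=(s+y_e)/m$, $\phi_w=\phi_{w_1}\circ\cdots\circ\phi_{w_k}$. For $y=y_1\cdots y_l\in\Sigma_Y^l$, $l\ge1$, $I_y=(\sum_{i=1}^l y_im^{-i},\sum_{i=1}^ly_im^{-i}+m^{-l})$. For a bounded $F\subseteq\mathbb R$, $N_k(F)$ is the least number of intervals $[j/m^k,(j+1)/m^k]$, $j\in\mathbb Z$, covering $F$. $\eta(v,x,y)$ (for $(x,y)\in\Sigma_X^k\times\Sigma_Y^k$): equals $\dim_B\pi(X_v\cap\psi_w((0,1)^2))$ if some $w\in E^*$ has $i(w)=v$ and $(x_w,y_w)=(x,y)$, and $0$ otherwise. $\theta(v,x,y,y')$ (for $y'\in\Sigma_Y^*$): equals $\eta(v,x,y)$ if $y'=\emptyset$; equals $\dim_B\big(\pi(X_v\cap\psi_w((0,1)^2))\cap\phi_w(I_{y'})\big)$ if $y'\ne\emptyset$ and such a $w$ exists; equals $0$ otherwise. *)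

From Stdlib Require Import Reals List ClassicalEpsilon.
From Coquelicot Require Import Coquelicot.
Open Scope R_scope.

Definition psi_e (n m : nat) (xe ye : nat) (p : R * R) : R * R :=
  ((fst p + INR xe) / INR n, (snd p + INR ye) / INR m).

Definition phi_e (m : nat) (ye : nat) (s : R) : R := (s + INR ye) / INR m.

Fixpoint admissible {V E : Type} (i t : E -> V) (w : list E) : Prop :=
  match w with
  | nil => True
  | e :: w' =>
      match w' with nil => True | e' :: _ => t e = i e' end /\ admissible i t w'
  end.

Definition word_from {V E : Type} (i t : E -> V) (v : V) (w : list E) : Prop :=
  admissible i t w /\ match w with nil => True | e :: _ => i e = v end.

Definition psi_w {E : Type} (n m : nat) (xl yl : E -> nat) (w : list E)
  : R * R -> R * R :=
  fold_right (fun e f => fun p => psi_e n m (xl e) (yl e) (f p)) (fun p => p) w.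

Definition phi_w {E : Type} (m : nat) (yl : E -> nat) (w : list E) : R -> R :=
  fold_right (fun e f => fun s => phi_e m (yl e) (f s)) (fun s => s) w.

Definition open_square (q : R * R) : Prop :=
  0 < fst q < 1 /\ 0 < snd q < 1.

Definition piece {E : Type} (n m : nat) (xl yl : E -> nat)
  (Xv : R * R -> Prop) (w : list E) : R -> Prop :=
  fun s => exists p, Xv p /\ (exists q, open_square q /\ p = psi_w n m xl yl w q)
                     /\ snd p = s.

(* sum_{i=1}^l y_i m^{-i} *)
Fixpoint adic (m : nat) (y : list nat) : R :=
  match y with
  | nil => 0
  | d :: y' => (INR d + adic m y') / INR m
  end.

Definition I_y (m : nat) (y : list nat) : R -> Prop :=
  fun u => adic m y < u < adic m y + / (INR m ^ length y).

Definition piece_y {E : Type} (n m : nat) (xl yl : E -> nat)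
  (Xv : R * R -> Prop) (w : list E) (y : list nat) : R -> Prop :=
  fun s => piece n m xl yl Xv w s /\ exists u, I_y m y u /\ s = phi_w m yl w u.

Definition covers (m k : nat) (F : R -> Prop) (J : list Z) : Prop :=
  forall s, F s -> exists j, In j J /\
    IZR j / INR m ^ k <= s <= (IZR j + 1) / INR m ^ k.

Definition is_Nk (m k : nat) (F : R -> Prop) (N : nat) : Prop :=
  (exists J, length J = N /\ covers m k F J) /\
  (forall J, covers m k F J -> (N <= length J)%nat).

Definition Nk (m k : nat) (F : R -> Prop) : nat :=
  epsilon (inhabits 0%nat) (is_Nk m k F).

Definition dimB (m : nat) (F : R -> Prop) : R :=
  real (Lim_seq (fun k => ln (INR (Nk m k F)) / (INR k * ln (INR m)))).

Definition label_witness {V E : Type} (i t : E -> V) (xl yl : E -> nat)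
  (v : V) (xs ys : list nat) (w : list E) : Prop :=
  word_from i t v w /\ map xl w = xs /\ map yl w = ys.

Definition eta {V E : Type} (i t : E -> V) (n m : nat) (xl yl : E -> nat)
  (X : V -> R * R -> Prop) (v : V) (xs ys : list nat) : R :=
  match excluded_middle_informative
          (exists w, label_witness i t xl yl v xs ys w) with
  | left H =>
      dimB m (piece n m xl yl (X v) (proj1_sig (constructive_indefinite_description _ H)))
  | right _ => 0
  end.

Definition theta {V E : Type} (i t : E -> V) (n m : nat) (xl yl : E -> nat)
  (X : V -> R * R -> Prop) (v : V) (xs ys y' : list nat) : R :=
  match y' with
  | nil => eta i t n m xl yl X v xs ys
  | _ :: _ =>
    match excluded_middle_informative
            (exists w, label_witness i t xl yl v xs ys w) with
    | left H =>
        dimB m (piece_y n m xl yl (X v)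
                  (proj1_sig (constructive_indefinite_description _ H)) y')
    | right _ => 0
    end
  end.

Definition closed2 (A : R * R -> Prop) : Prop :=
  forall p, (forall eps, 0 < eps -> exists q, A q /\
               Rabs (fst q - fst p) < eps /\ Rabs (snd q - snd p) < eps) -> A p.

Definition in_unit_square (p : R * R) : Prop :=
  0 <= fst p <= 1 /\ 0 <= snd p <= 1.

(** The projected piece of a cylinder, and every [m]-adic zoom of it, is an affine
    copy of one set of a finite family: the heights in [(0, 1)] of the points of the [X v] whose
    abscissa may touch the endpoints [0] or [1] only as prescribed by a flag on [v].  Zooming in
    by one [y]-digit only recombines the attractors along the edges carrying that digit, which
    keeps the family closed under zooms.  For a finite zoom-closed family, [N_k] is comparable
    (up to a factor [3 m^J]) to the largest cell count [B k] of a zoom of depth at most [J], and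
    [B (L + k) <= B L (B k + 2)]; Fekete's lemma applied to [ln (3 B k)] gives the limit defining
    the box dimension, and finiteness of the family makes the constants uniform.  Finally a copy
    of a set at level [|w|] has the same counts, shifted by [|w|] levels, and the same dimension. *)

From Stdlib Require Import Reals List Lra Lia ZArith Wf_nat ClassicalEpsilon Classical
  FunctionalExtensionality PropExtensionality Bool.
From Coquelicot Require Import Coquelicot.
Open Scope R_scope.

Fixpoint count_below (P : nat -> Prop) (N : nat) : nat :=
  match N with
  | O => O
  | S N' => (count_below P N' + (if excluded_middle_informative (P N') then 1 else 0))%nat
  end.

Lemma count_below_le_bound P N : (count_below P N <= N)%nat.
Proof. induction N; simpl; [lia|]. destruct excluded_middle_informative; lia. Qed.

Lemma count_below_impl (P Q : nat -> Prop) N :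
  (forall j, (j < N)%nat -> P j -> Q j) -> (count_below P N <= count_below Q N)%nat.
Proof.
  induction N; intros H; simpl; [lia|].
  assert (IH := IHN (fun j Hj => H j ltac:(lia))).
  destruct (excluded_middle_informative (P N)) as [p|p];
  destruct (excluded_middle_informative (Q N)) as [q|q]; try lia.
  exfalso; apply q, H; auto.
Qed.

Lemma count_below_or P Q N :
  (count_below (fun j => P j \/ Q j) N <= count_below P N + count_below Q N)%nat.
Proof.
  induction N; simpl; [lia|].
  destruct (excluded_middle_informative (P N \/ Q N));
  destruct (excluded_middle_informative (P N)); destruct (excluded_middle_informative (Q N));
  try tauto; lia.
Qed.

Lemma count_below_add P N M :
  count_below P (N + M) = (count_below P N + count_below (fun r => P (N + r)%nat) M)%nat.
Proof.
  induction M; simpl.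
  - rewrite Nat.add_0_r; lia.
  - rewrite Nat.add_succ_r; simpl. rewrite IHM. lia.
Qed.

Lemma count_below_none P N :
  (forall j, (j < N)%nat -> ~ P j) -> count_below P N = 0%nat.
Proof.
  induction N; intros H; simpl; auto.
  rewrite IHN by (intros; apply H; lia).
  destruct excluded_middle_informative as [p|p]; auto. exfalso; apply (H N); auto.
Qed.

Lemma count_below_mono_bound P N1 N2 :
  (N1 <= N2)%nat -> (count_below P N1 <= count_below P N2)%nat.
Proof.
  intros H. replace N2 with (N1 + (N2 - N1))%nat by lia. rewrite count_below_add. lia.
Qed.

Lemma count_below_pos P N j : (j < N)%nat -> P j -> (1 <= count_below P N)%nat.
Proof.
  intros Hj Pj. eapply Nat.le_trans; [|apply (count_below_mono_bound P (S j) N Hj)].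
  simpl. destruct excluded_middle_informative; [lia|tauto].
Qed.

Lemma count_below_blocks P Q a b K :
  (forall y, (y < a)%nat ->
     (count_below (fun r => P (y * b + r)%nat) b
        <= K * (if excluded_middle_informative (Q y) then 1 else 0))%nat) ->
  (count_below P (a * b) <= count_below Q a * K)%nat.
Proof.
  revert b; induction a as [|a IH]; intros b H; simpl; [lia|].
  rewrite (Nat.add_comm b (a * b)), count_below_add.
  assert (H1 := H a (Nat.lt_succ_diag_r a)).
  assert (H2 : (count_below P (a * b) <= count_below Q a * K)%nat)
    by (apply IH; intros; apply H; lia).
  destruct (excluded_middle_informative (Q a)); nia.
Qed.

Lemma count_below_block_le P y b N : (y * b + b <= N)%nat ->
  (count_below (fun r => P (y * b + r)%nat) b <= count_below P N)%nat.
Proof.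
  intros H. eapply Nat.le_trans; [|apply (count_below_mono_bound P _ _ H)].
  rewrite count_below_add. lia.
Qed.

Lemma count_below_eq_Z (z : Z) N : (count_below (fun j => Z.of_nat j = z) N <= 1)%nat.
Proof.
  induction N; simpl; [lia|].
  destruct excluded_middle_informative as [e|e]; [|lia].
  rewrite count_below_none; [lia|]. intros j Hj Hz. lia.
Qed.

Lemma count_below_near_Z (z : Z) N :
  (count_below (fun j => (z - 1 <= Z.of_nat j <= z + 1)%Z) N <= 3)%nat.
Proof.
  eapply Nat.le_trans.
  - apply (count_below_impl _ (fun j => Z.of_nat j = (z - 1)%Z \/
                               (Z.of_nat j = z \/ Z.of_nat j = (z + 1)%Z))).
    intros; lia.
  - eapply Nat.le_trans; [apply count_below_or|].
    assert (h1 := count_below_eq_Z (z - 1) N).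
    assert (h2 := count_below_or (fun j => Z.of_nat j = z) (fun j => Z.of_nat j = (z + 1)%Z) N).
    assert (h3 := count_below_eq_Z z N). assert (h4 := count_below_eq_Z (z + 1) N). lia.
Qed.

Lemma count_below_list_cover {A} (P : nat -> Prop) (Q : A -> nat -> Prop) (l : list A) N K :
  (forall j, (j < N)%nat -> P j -> exists a, In a l /\ Q a j) ->
  (forall a, (count_below (Q a) N <= K)%nat) ->
  (count_below P N <= K * length l)%nat.
Proof.
  intros Hcov HK. revert P Hcov; induction l as [|a l IH]; intros P Hcov; simpl.
  - rewrite count_below_none; [lia|]. intros j Hj Pj. now destruct (Hcov j Hj Pj) as [? [[] _]].
  - eapply Nat.le_trans.
    + apply (count_below_impl P (fun j => Q a j \/ (P j /\ ~ Q a j))). intros j Hj Pj. tauto.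
    + eapply Nat.le_trans; [apply count_below_or|].
      assert (count_below (fun j => P j /\ ~ Q a j) N <= K * length l)%nat.
      { apply IH. intros j Hj [Pj nQ].
        destruct (Hcov j Hj Pj) as [b [[<-|Hb] Qb]]; [tauto|eauto]. }
      specialize (HK a). lia.
Qed.

Lemma count_below_list (P : nat -> Prop) N :
  exists J, length J = count_below P N /\
            forall j, (j < N)%nat -> P j -> In (Z.of_nat j) J.
Proof.
  induction N as [|N [J [HJ HJin]]].
  - exists nil; split; auto. intros; lia.
  - simpl. destruct (excluded_middle_informative (P N)) as [p|p].
    + exists (J ++ Z.of_nat N :: nil). rewrite length_app; simpl; split; [lia|].
      intros j Hj Pj. apply in_or_app.
      destruct (Nat.eq_dec j N) as [->|ne]; [right; now left|].
      left; apply HJin; auto; lia.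
    + exists J; split; [lia|]. intros j Hj Pj.
      destruct (Nat.eq_dec j N) as [->|ne]; [tauto|].
      apply HJin; auto; lia.
Qed.

Lemma set_ext (F G : R -> Prop) : (forall s, F s <-> G s) -> F = G.
Proof.
  intros H. apply functional_extensionality. intros s. apply propositional_extensionality. auto.
Qed.

Lemma nat_least (P : nat -> Prop) :
  (exists N, P N) -> exists N, P N /\ forall N', P N' -> (N <= N')%nat.
Proof.
  intros HP. destruct (dec_inh_nat_subset_has_unique_least_element P (fun N => classic (P N)) HP)
    as [N [[PN Hmin] _]].
  eauto.
Qed.

Lemma unit_cell_index (N : nat) (x : R) : (1 <= N)%nat -> 0 <= x <= INR N ->
  exists j, (j < N)%nat /\ INR j <= x <= INR j + 1.
Proof.
  induction N as [|N IH]; intros HN Hx; [lia|].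
  destruct (Nat.eq_dec N 0) as [->|HN0].
  - exists 0%nat; split; [lia|]. simpl in *; lra.
  - destruct (Rle_dec x (INR N)) as [Hle|Hgt].
    + destruct (IH ltac:(lia) ltac:(lra)) as [j [Hj Hj']]. exists j; split; auto; lia.
    + exists N; split; [lia|]. rewrite S_INR in Hx. lra.
Qed.

Lemma INR_le_pred (a b : nat) : (a < b)%nat -> INR a + 1 <= INR b.
Proof. intros H. rewrite <- S_INR. apply le_INR. lia. Qed.

Lemma INR_close_eq (a b : nat) : INR a - INR b < 1 -> INR b - INR a < 1 -> a = b.
Proof.
  intros h1 h2. destruct (Nat.lt_total a b) as [h|[h|h]]; auto;
    apply INR_le_pred in h; lra.
Qed.

Definition in_unit_interval (F : R -> Prop) : Prop := forall s, F s -> 0 <= s <= 1.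

Section Grid.
Variable m : nat.
Hypothesis Hm : (0 < m)%nat.

Lemma mpow_pos k : 0 < INR m ^ k.
Proof. apply pow_lt, lt_0_INR; auto. Qed.

Lemma digit_bound Y L : (Y < m ^ L)%nat -> INR Y + 1 <= INR m ^ L.
Proof. intros H. rewrite <- pow_INR. now apply INR_le_pred. Qed.

Lemma pow_ge1 k : (1 <= m ^ k)%nat.
Proof. induction k; simpl; [lia|]. nia. Qed.

Definition meets_cell (k : nat) (F : R -> Prop) (j : nat) : Prop :=
  exists s, F s /\ INR j <= s * INR m ^ k <= INR j + 1.

Definition cell_count (k : nat) (F : R -> Prop) : nat := count_below (meets_cell k F) (m ^ k).

Lemma cell_of_point k s : 0 <= s <= 1 ->
  exists j, (j < m ^ k)%nat /\ INR j <= s * INR m ^ k <= INR j + 1.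
Proof.
  intros Hs. assert (HM := mpow_pos k).
  apply unit_cell_index; [apply pow_ge1|]. rewrite pow_INR. split; nra.
Qed.

Lemma cell_covers k s j :
  INR j <= s * INR m ^ k <= INR j + 1 ->
  IZR (Z.of_nat j) / INR m ^ k <= s <= (IZR (Z.of_nat j) + 1) / INR m ^ k.
Proof.
  intros Hj. assert (HM := mpow_pos k). rewrite <- INR_IZR_INZ.
  rewrite Rle_div_l, <- Rle_div_r by auto. lra.
Qed.

Lemma is_Nk_exists k F : in_unit_interval F -> exists N, is_Nk m k F N.
Proof.
  intros HF.
  destruct (nat_least (fun N => exists J, length J = N /\ covers m k F J)) as [N [HN Hmin]].
  - exists (length (map Z.of_nat (seq 0 (m ^ k)))). eexists; split; [reflexivity|].
    intros s Fs. destruct (cell_of_point k s (HF s Fs)) as [j [Hj Hc]].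
    exists (Z.of_nat j). split; [apply in_map, in_seq; lia| now apply cell_covers].
  - exists N. split; auto. intros J HJ. apply Hmin. eauto.
Qed.

Lemma Nk_spec k F : in_unit_interval F -> is_Nk m k F (Nk m k F).
Proof. intros HF. unfold Nk. apply epsilon_spec, is_Nk_exists; auto. Qed.

Lemma Nk_le_cover k F J : in_unit_interval F -> covers m k F J -> (Nk m k F <= length J)%nat.
Proof. intros HF HJ. destruct (Nk_spec k F HF) as [_ H]. auto. Qed.

Lemma Nk_attained k F : in_unit_interval F ->
  exists J, length J = Nk m k F /\ covers m k F J.
Proof. intros HF. destruct (Nk_spec k F HF) as [H _]. auto. Qed.

Lemma Nk_empty k F : (forall s, ~ F s) -> Nk m k F = 0%nat.
Proof.
  intros HF. assert (H01 : in_unit_interval F) by (intros s Fs; destruct (HF s Fs)).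
  assert (H := Nk_le_cover k F nil H01). simpl in H.
  enough (Nk m k F <= 0)%nat by lia. apply H. intros s Fs; destruct (HF s Fs).
Qed.

Lemma Nk_le_cell_count k F : in_unit_interval F -> (Nk m k F <= cell_count k F)%nat.
Proof.
  intros HF. destruct (count_below_list (meets_cell k F) (m ^ k)) as [J [HJ HJin]].
  unfold cell_count; rewrite <- HJ. apply Nk_le_cover; auto.
  intros s Fs. destruct (cell_of_point k s (HF s Fs)) as [j [Hj Hc]].
  exists (Z.of_nat j). split; [apply HJin; auto; exists s; auto| now apply cell_covers].
Qed.

(** An interval of a cover only shares points with the grid cells [j - 1], [j], [j + 1]. *)
Lemma cell_count_le_cover k F J : covers m k F J -> (cell_count k F <= 3 * length J)%nat.
Proof.
  intros HJ. apply count_below_list_cover with (Q := fun z j => (z - 1 <= Z.of_nat j <= z + 1)%Z).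
  - intros j Hj [s [Fs Hs]]. destruct (HJ s Fs) as [z [Hz Hzs]]. exists z; split; auto.
    assert (HM := mpow_pos k).
    rewrite Rle_div_l, <- Rle_div_r in Hzs by auto.
    assert (A1 : INR j < IZR z + 2) by lra. assert (A2 : IZR z < INR j + 2) by lra.
    rewrite INR_IZR_INZ, <- plus_IZR in A1, A2.
    apply lt_IZR in A1. apply lt_IZR in A2. lia.
  - intros z. apply count_below_near_Z.
Qed.

Lemma cell_count_le_3Nk k F : in_unit_interval F -> (cell_count k F <= 3 * Nk m k F)%nat.
Proof.
  intros HF. destruct (Nk_attained k F HF) as [J [HJ HJc]]. rewrite <- HJ.
  now apply cell_count_le_cover.
Qed.

Lemma cell_count_pos k F : in_unit_interval F -> (exists s, F s) -> (1 <= cell_count k F)%nat.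
Proof.
  intros HF [s Fs]. destruct (cell_of_point k s (HF s Fs)) as [j [Hj Hc]].
  apply (count_below_pos _ _ j); auto. exists s; auto.
Qed.

Lemma Nk_pos k F : in_unit_interval F -> (exists s, F s) -> (1 <= Nk m k F)%nat.
Proof.
  intros HF Hne. assert (h1 := cell_count_pos k F HF Hne).
  assert (h2 := cell_count_le_3Nk k F HF). lia.
Qed.

Lemma Nk_le_pow k F : in_unit_interval F -> (Nk m k F <= m ^ k)%nat.
Proof.
  intros HF. assert (h1 := Nk_le_cell_count k F HF).
  assert (h2 := count_below_le_bound (meets_cell k F) (m ^ k)). unfold cell_count in h1. lia.
Qed.

Lemma meets_cell_parent L k F y r : (r < m ^ k)%nat ->
  meets_cell (L + k) F (y * m ^ k + r) -> meets_cell L F y.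
Proof.
  intros Hr [s [Fs Hs]]. exists s; split; auto.
  rewrite plus_INR, mult_INR, pow_INR, pow_add in Hs.
  assert (HML := mpow_pos L). assert (HMk := mpow_pos k).
  assert (Hr1 := digit_bound r k Hr). assert (0 <= INR r) by apply pos_INR.
  split; apply (Rmult_le_reg_r (INR m ^ k)); auto; nra.
Qed.

Lemma cell_count_refine k j F : (cell_count (k + j) F <= cell_count k F * m ^ j)%nat.
Proof.
  unfold cell_count. rewrite Nat.pow_add_r. apply count_below_blocks. intros y Hy.
  destruct (excluded_middle_informative (meets_cell k F y)) as [c|c].
  - rewrite Nat.mul_1_r. apply count_below_le_bound.
  - rewrite count_below_none; [lia|]. intros r Hr Hc. apply c.
    now apply (meets_cell_parent k j F y r).
Qed.

Definition cyl (L Y : nat) (s : R) : R := (s + INR Y) / INR m ^ L.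

Definition image (L Y : nat) (F : R -> Prop) : R -> Prop :=
  fun s => exists s', F s' /\ s = cyl L Y s'.

Definition zoom (F : R -> Prop) (L Y : nat) : R -> Prop :=
  fun s => 0 < s < 1 /\ F (cyl L Y s).

Lemma cyl_scaled L k Y s : cyl L Y s * INR m ^ (L + k) = s * INR m ^ k + INR Y * INR m ^ k.
Proof. unfold cyl. rewrite pow_add. assert (H := mpow_pos L). field. lra. Qed.

Lemma cyl_comp L1 Y1 L2 Y2 s :
  cyl L1 Y1 (cyl L2 Y2 s) = cyl (L1 + L2) (Y1 * m ^ L2 + Y2) s.
Proof.
  unfold cyl. rewrite pow_add, plus_INR, mult_INR, pow_INR.
  assert (H1 := mpow_pos L1). assert (H2 := mpow_pos L2). field. lra.
Qed.

Lemma cyl_inj L Y a b : cyl L Y a = cyl L Y b -> a = b.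
Proof.
  unfold cyl. intros H. assert (HM := mpow_pos L).
  apply (Rmult_eq_compat_r (INR m ^ L)) in H. unfold Rdiv in H.
  rewrite !Rmult_assoc, Rinv_l in H by lra. lra.
Qed.

Lemma cyl_in01 L Y s : (Y < m ^ L)%nat -> 0 < s < 1 -> 0 < cyl L Y s < 1.
Proof.
  intros HY Hs. unfold cyl. assert (HM := mpow_pos L).
  assert (H1 := digit_bound Y L HY). assert (0 <= INR Y) by apply pos_INR.
  split; [apply Rdiv_lt_0_compat; lra|]. rewrite Rlt_div_l by auto. lra.
Qed.

Lemma image_unit_interval L Y F : in_unit_interval F -> (Y < m ^ L)%nat ->
  in_unit_interval (image L Y F).
Proof.
  intros HF HY s [s' [Fs' ->]]. destruct (HF s' Fs'). unfold cyl.
  assert (HM := mpow_pos L). assert (H1 := digit_bound Y L HY).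
  assert (0 <= INR Y) by apply pos_INR.
  split; [apply Rmult_le_pos; [lra|left; apply Rinv_0_lt_compat; auto]|].
  rewrite Rle_div_l by auto. lra.
Qed.

Lemma covers_image k L Y F J : covers m k F J ->
  covers m (k + L) (image L Y F) (map (fun z => (z + Z.of_nat (Y * m ^ k))%Z) J).
Proof.
  intros HJ s [s' [Fs' ->]]. destruct (HJ s' Fs') as [z [Hz Hzs]].
  exists (z + Z.of_nat (Y * m ^ k))%Z. split; [now apply (in_map (fun z => (z + Z.of_nat (Y * m ^ k))%Z))|].
  assert (HMk := mpow_pos k). assert (HMkL := mpow_pos (k + L)).
  rewrite Rle_div_l, <- Rle_div_r in Hzs |- * by auto.
  rewrite plus_IZR, <- INR_IZR_INZ, mult_INR, pow_INR, Nat.add_comm, cyl_scaled. lra.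
Qed.

Lemma covers_preimage k L Y F J : covers m (k + L) (image L Y F) J ->
  covers m k F (map (fun z => (z - Z.of_nat (Y * m ^ k))%Z) J).
Proof.
  intros HJ s Fs. destruct (HJ (cyl L Y s) (ex_intro _ s (conj Fs eq_refl))) as [z [Hz Hzs]].
  exists (z - Z.of_nat (Y * m ^ k))%Z. split; [now apply (in_map (fun z => (z - Z.of_nat (Y * m ^ k))%Z))|].
  assert (HMk := mpow_pos k). assert (HMkL := mpow_pos (k + L)).
  rewrite Rle_div_l, <- Rle_div_r in Hzs |- * by auto.
  rewrite Nat.add_comm, cyl_scaled in Hzs.
  rewrite minus_IZR, <- INR_IZR_INZ, mult_INR, pow_INR. lra.
Qed.

Lemma Nk_image k L Y F : in_unit_interval F -> (Y < m ^ L)%nat ->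
  Nk m (k + L) (image L Y F) = Nk m k F.
Proof.
  intros HF HY. assert (HI := image_unit_interval L Y F HF HY).
  apply Nat.le_antisymm.
  - destruct (Nk_attained k F HF) as [J [HJ HJc]]. rewrite <- HJ.
    rewrite <- (length_map (fun z => (z + Z.of_nat (Y * m ^ k))%Z) J).
    apply Nk_le_cover, covers_image; auto.
  - destruct (Nk_attained (k + L) (image L Y F) HI) as [J [HJ HJc]]. rewrite <- HJ.
    rewrite <- (length_map (fun z => (z - Z.of_nat (Y * m ^ k))%Z) J).
    apply Nk_le_cover; auto. now apply covers_preimage with L.
Qed.

Lemma zoom_comp F L1 Y1 L2 Y2 : (Y2 < m ^ L2)%nat ->
  zoom (zoom F L1 Y1) L2 Y2 = zoom F (L1 + L2) (Y1 * m ^ L2 + Y2).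
Proof.
  intros HY. apply set_ext. intros s. unfold zoom. rewrite cyl_comp. split.
  - intros [h [_ h']]; auto.
  - intros [h h']. split; [|split]; auto. apply cyl_in01; auto.
Qed.

Lemma zoom_0 F : (forall s, F s -> 0 < s < 1) -> zoom F 0 0 = F.
Proof.
  intros HF. apply set_ext. intros s. unfold zoom, cyl. simpl.
  replace ((s + 0) / 1) with s by field. split; [tauto|]. intros h; split; auto.
Qed.

Lemma cell_count_zoom_le L k F Y : (Y < m ^ L)%nat ->
  (cell_count k (zoom F L Y) <= cell_count (L + k) F)%nat.
Proof.
  intros HY. unfold cell_count. rewrite Nat.pow_add_r.
  eapply Nat.le_trans; [|apply (count_below_block_le _ Y (m ^ k)); nia].
  apply count_below_impl. intros r Hr [s [[Hs01 Fs] Hs]]. exists (cyl L Y s). split; auto.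
  rewrite cyl_scaled, plus_INR, mult_INR, pow_INR. lra.
Qed.

(** Inside the parent cell [y] of level [L], a subcell [r] of level [L + k] meeting [F]
    meets the zoom of [F] on [y], unless it is reached only through an endpoint of the
    parent cell, which forces [r] to be the first or the last subcell. *)
Lemma meets_cell_zoom L k F y r : (r < m ^ k)%nat ->
  meets_cell (L + k) F (y * m ^ k + r) ->
  meets_cell k (zoom F L y) r \/ r = 0%nat \/ r = (m ^ k - 1)%nat.
Proof.
  intros Hr [s [Fs Hs]].
  rewrite plus_INR, mult_INR, pow_INR, pow_add, <- Rmult_assoc in Hs.
  assert (HML := mpow_pos L). assert (HMk := mpow_pos k).
  assert (Hr1 := digit_bound r k Hr). assert (0 <= INR r) by apply pos_INR.
  assert (Hlo : INR y <= s * INR m ^ L) by (apply (Rmult_le_reg_r (INR m ^ k)); auto; nra).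
  assert (Hhi : s * INR m ^ L <= INR y + 1) by (apply (Rmult_le_reg_r (INR m ^ k)); auto; nra).
  destruct (Req_dec (s * INR m ^ L) (INR y)) as [e|e].
  { right; left. rewrite e in Hs. apply INR_eq. simpl. nra. }
  destruct (Req_dec (s * INR m ^ L) (INR y + 1)) as [e'|e'].
  { right; right. rewrite e' in Hs. apply INR_eq. rewrite minus_INR by apply pow_ge1.
    rewrite pow_INR. simpl. nra. }
  left. exists (s * INR m ^ L - INR y). split.
  - split; [lra|]. unfold cyl. replace ((s * INR m ^ L - INR y + INR y) / INR m ^ L) with s
      by (field; lra). auto.
  - nra.
Qed.

Lemma cell_count_split L k F K :
  (forall Y, (Y < m ^ L)%nat -> (cell_count k (zoom F L Y) <= K)%nat) ->
  (cell_count (L + k) F <= cell_count L F * (K + 2))%nat.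
Proof.
  intros HK. unfold cell_count at 1. rewrite Nat.pow_add_r. apply count_below_blocks.
  intros y Hy. destruct (excluded_middle_informative (meets_cell L F y)) as [c|c].
  - rewrite Nat.mul_1_r. eapply Nat.le_trans.
    + apply (count_below_impl _ (fun r => meets_cell k (zoom F L y) r \/
               (Z.of_nat r = 0%Z \/ Z.of_nat r = Z.of_nat (m ^ k - 1)))).
      intros r Hr Hc. destruct (meets_cell_zoom L k F y r Hr Hc) as [h | [-> | ->]]; auto.
    + eapply Nat.le_trans; [apply count_below_or|].
      eapply Nat.le_trans; [apply Nat.add_le_mono; [apply HK; auto| apply count_below_or]|].
      assert (h1 := count_below_eq_Z 0 (m ^ k)).
      assert (h2 := count_below_eq_Z (Z.of_nat (m ^ k - 1)) (m ^ k)). lia.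
  - rewrite count_below_none; [lia|]. intros r Hr Hc. apply c.
    now apply (meets_cell_parent L k F y r).
Qed.

End Grid.

Lemma finite_upper_bound (u : nat -> R) q :
  exists S, forall r, (r < q)%nat -> u r <= S.
Proof.
  induction q as [|q [S HS]]; [exists 0; intros; lia|].
  exists (Rmax S (u q)). intros r Hr. destruct (Nat.eq_dec r q) as [->|ne]; [apply Rmax_r|].
  eapply Rle_trans; [apply HS; lia|apply Rmax_l].
Qed.

Lemma subadditive_iter (u : nat -> R) q r a : (forall x y, u (x + y)%nat <= u x + u y) ->
  u (a * q + r)%nat <= INR a * u q + u r.
Proof.
  intros Hs. induction a.
  - simpl; lra.
  - replace (S a * q + r)%nat with (q + (a * q + r))%nat by lia.
    rewrite S_INR. specialize (Hs q (a * q + r)%nat). lra.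
Qed.

Lemma ratio_infimum (u : nat -> R) : (forall k, 0 <= u k) ->
  exists l, 0 <= l /\ (forall k, (1 <= k)%nat -> l <= u k / INR k) /\
    forall e, 0 < e -> exists q, (1 <= q)%nat /\ u q / INR q < l + e.
Proof.
  intros Hu.
  assert (Hratio : forall k, (1 <= k)%nat -> 0 <= u k / INR k).
  { intros k Hk. apply Rmult_le_pos; auto. left; apply Rinv_0_lt_compat, lt_0_INR; lia. }
  set (A := fun x => exists k, (1 <= k)%nat /\ x = - (u k / INR k)).
  assert (HB : bound A) by (exists 0; intros x [k [Hk ->]]; specialize (Hratio k Hk); lra).
  assert (HA : exists x, A x) by (exists (- (u 1%nat / INR 1)); exists 1%nat; auto).
  destruct (completeness A HB HA) as [l [Hub Hlub]].
  exists (- l). split; [|split].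
  - enough (l <= 0) by lra. apply Hlub. intros x [k [Hk ->]]. specialize (Hratio k Hk). lra.
  - intros k Hk. enough (- (u k / INR k) <= l) by lra. apply Hub. exists k; auto.
  - intros e He. apply NNPP. intros Hno.
    enough (l <= l - e) by lra. apply Hlub. intros x [k [Hk ->]].
    assert (~ (u k / INR k < - l + e)) by (intros h; apply Hno; eauto). lra.
Qed.

Lemma fekete (u : nat -> R) : (forall x y, u (x + y)%nat <= u x + u y) -> (forall k, 0 <= u k) ->
  exists l, 0 <= l /\ is_lim_seq (fun k => u k / INR k) l.
Proof.
  intros Hs Hu. destruct (ratio_infimum u Hu) as [l [Hl [Hlow Happrox]]].
  exists l. split; auto. apply is_lim_seq_spec. intros [e He]; simpl.
  destruct (Happrox (e / 2)) as [q [Hq Huq]]; [lra|].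
  destruct (finite_upper_bound u q) as [B HS].
  assert (HS0 : 0 <= B) by (apply (Rle_trans _ (u 0%nat)); auto; apply HS; lia).
  destruct (INR_unbounded (B / (e / 2))) as [N HN].
  exists (S N). intros k Hk.
  assert (Hk0 : 0 < INR k) by (apply lt_0_INR; lia).
  assert (HqR : 0 < INR q) by (apply lt_0_INR; lia).
  assert (Hlk := Hlow k ltac:(lia)).
  apply Rabs_lt_between'. split; [lra|].
  set (a := (k / q)%nat). set (r := (k mod q)%nat).
  assert (Ek : k = (a * q + r)%nat) by (unfold a, r; rewrite Nat.mul_comm; apply Nat.div_mod; lia).
  assert (Hr : (r < q)%nat) by (apply Nat.mod_upper_bound; lia).
  assert (H1 := subadditive_iter u q r a Hs). rewrite <- Ek in H1.
  assert (Haq : INR a * INR q <= INR k) by (rewrite <- mult_INR; apply le_INR; lia).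
  assert (H3 : INR a * u q <= INR k * (u q / INR q)).
  { replace (INR a * u q) with ((INR a * INR q) * (u q / INR q)) by (field; lra).
    apply Rmult_le_compat_r; auto. apply Rmult_le_pos; [auto|left; apply Rinv_0_lt_compat; auto]. }
  assert (H4 : B < INR k * (e / 2)).
  { unfold Rgt in HN. rewrite Rlt_div_l in HN by lra.
    assert (INR N < INR k) by (apply lt_INR; lia). nra. }
  rewrite Rlt_div_l by auto. specialize (HS r Hr). nra.
Qed.

Lemma is_lim_seq_close (x y : nat -> R) (l D : R) : is_lim_seq x l ->
  (forall k, (1 <= k)%nat -> Rabs (y k - x k) <= D / INR k) -> is_lim_seq y l.
Proof.
  intros Hx Hxy. apply is_lim_seq_spec. apply is_lim_seq_spec in Hx.
  intros [e He]; simpl. destruct (Hx (mkposreal (e / 2) ltac:(lra))) as [N1 HN1]. simpl in HN1.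
  destruct (INR_unbounded (Rabs D / (e / 2))) as [N2 HN2].
  exists (S (N1 + N2)). intros k Hk.
  assert (Hk0 : 0 < INR k) by (apply lt_0_INR; lia).
  assert (HN2k : INR N2 < INR k) by (apply lt_INR; lia).
  specialize (HN1 k ltac:(lia)). specialize (Hxy k ltac:(lia)).
  assert (HD : D / INR k < e / 2).
  { unfold Rgt in HN2. rewrite Rlt_div_l in HN2 |- * by lra. assert (D <= Rabs D) by apply Rle_abs. nra. }
  replace (y k - l) with ((y k - x k) + (x k - l)) by ring.
  eapply Rle_lt_trans; [apply Rabs_triang|]. lra.
Qed.

Lemma Rpower_ge1 b x : 1 <= b -> 0 <= x -> 1 <= Rpower b x.
Proof.
  intros Hb Hx. rewrite <- (Rpower_O b) by lra. apply Rle_Rpower; auto.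
Qed.

Lemma Rpower_bounds_of_log_ratio (m : nat) (N : R) k d eps : (2 <= m)%nat -> (1 <= k)%nat ->
  1 <= N -> Rabs (ln N / (INR k * ln (INR m)) - d) < eps ->
  Rpower (INR m) (INR k * (d - eps)) <= N <= Rpower (INR m) (INR k * (d + eps)).
Proof.
  intros Hm Hk HN Hr. apply Rabs_lt_between' in Hr.
  assert (Hm1 : 1 < INR m) by (apply (lt_INR 1); lia).
  assert (Hlm : 0 < ln (INR m)) by (rewrite <- ln_1; apply ln_increasing; lra).
  assert (Hkl : 0 < INR k * ln (INR m)) by (apply Rmult_lt_0_compat; auto; apply lt_0_INR; lia).
  destruct Hr as [Hr1 Hr2].
  rewrite Rlt_div_l in Hr2 by auto. rewrite <- Rlt_div_r in Hr1 by auto.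
  replace N with (Rpower (INR m) (ln N / ln (INR m)))
    by (unfold Rpower; replace (ln N / ln (INR m) * ln (INR m)) with (ln N) by (field; lra);
        apply exp_ln; lra).
  split; apply Rle_Rpower; try lra.
  - rewrite <- Rle_div_r by auto. nra.
  - rewrite Rle_div_l by auto. nra.
Qed.

Lemma Nk_bounds_of_limit (m : nat) (Nseq : nat -> nat) (Hm : (2 <= m)%nat)
  (H1 : forall k, (1 <= Nseq k)%nat) (H2 : forall k, (Nseq k <= m ^ k)%nat) d (Hd : 0 <= d)
  (Hlim : is_lim_seq (fun k => ln (INR (Nseq k)) / (INR k * ln (INR m))) d) :
  forall eps, 0 < eps -> exists c, 0 < c /\ forall k,
    / c * Rpower (INR m) (INR k * (d - eps)) <= INR (Nseq k) /\
    INR (Nseq k) <= c * Rpower (INR m) (INR k * (d + eps)).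
Proof.
  intros eps Heps. apply is_lim_seq_spec in Hlim.
  destruct (Hlim (mkposreal _ Heps)) as [K HK]. simpl in HK.
  assert (Hm1 : 1 <= INR m) by (apply (le_INR 1); lia).
  (* for [k < K] the bounds only use [1 <= N_k <= m^K] *)
  set (c := INR m ^ K * Rpower (INR m) (INR K * d)).
  assert (HmK : 1 <= INR m ^ K) by (apply pow_R1_Rle; auto).
  assert (HR : 1 <= Rpower (INR m) (INR K * d))
    by (apply Rpower_ge1; auto; apply Rmult_le_pos; auto; apply pos_INR).
  assert (Hc1 : 1 <= c) by (unfold c; nra).
  assert (Hic : 0 < / c <= 1)
    by (split; [apply Rinv_0_lt_compat; lra|rewrite <- Rinv_1; apply Rinv_le_contravar; lra]).
  exists c. split; [lra|]. intros k.
  assert (HN1 : 1 <= INR (Nseq k)) by (apply (le_INR 1); auto).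
  assert (Hup : 1 <= Rpower (INR m) (INR k * (d + eps)))
    by (apply Rpower_ge1; auto; apply Rmult_le_pos; [apply pos_INR|lra]).
  destruct (le_lt_dec K k) as [HKk|HKk]; [destruct (Nat.eq_dec k 0) as [->|Hk0]|].
  - simpl INR in *. rewrite (Rmult_0_l (d - eps)), Rpower_O by lra.
    assert (E0 : Nseq 0%nat = 1%nat)
      by (specialize (H1 0%nat); specialize (H2 0%nat); simpl in H2; lia).
    rewrite E0. simpl. nra.
  - destruct (Rpower_bounds_of_log_ratio m _ k d eps Hm ltac:(lia) HN1 (HK k HKk)). nra.
  - assert (HNK : INR (Nseq k) <= INR m ^ K).
    { rewrite <- pow_INR. apply le_INR. eapply Nat.le_trans; [apply H2|].
      apply Nat.pow_le_mono_r; lia. }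
    assert (Rpower (INR m) (INR k * (d - eps)) <= Rpower (INR m) (INR K * d)).
    { apply Rle_Rpower; auto. assert (INR k <= INR K) by (apply le_INR; lia).
      assert (0 <= INR k) by apply pos_INR. nra. }
    assert (Hc : INR m ^ K <= c /\ Rpower (INR m) (INR K * d) <= c) by (unfold c; split; nra).
    split; [|nra].
    apply (Rle_trans _ (/ c * c)); [apply Rmult_le_compat_l; lra|].
    rewrite Rinv_l by lra. lra.
Qed.

Lemma dimB_base1 F : dimB 1 F = 0.
Proof.
  unfold dimB. rewrite (Lim_seq_ext _ (fun _ => 0)).
  - rewrite Lim_seq_const. auto.
  - intros k. simpl (INR 1). rewrite ln_1, Rmult_0_r. unfold Rdiv. rewrite Rinv_0. ring.
Qed.

Fixpoint max_below (N : nat) (f : nat -> nat) : nat :=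
  match N with O => O | S N' => Nat.max (max_below N' f) (f N') end.

Lemma max_below_ge N f i : (i < N)%nat -> (f i <= max_below N f)%nat.
Proof.
  induction N; simpl; intros; [lia|]. destruct (Nat.eq_dec i N); subst; [lia|].
  specialize (IHN ltac:(lia)); lia.
Qed.

Lemma max_below_le N f K :
  (forall i, (i < N)%nat -> (f i <= K)%nat) -> (max_below N f <= K)%nat.
Proof.
  induction N; simpl; intros H; [lia|].
  specialize (IHN (fun i Hi => H i ltac:(lia))). specialize (H N ltac:(lia)). lia.
Qed.

Lemma list_bounded_witness {A} (P : nat -> A -> Prop) (l : list A) :
  exists J, forall a, In a l -> (exists L, P L a) -> exists L, (L <= J)%nat /\ P L a.
Proof.
  induction l as [|a l [J HJ]]; [exists 0%nat; intros a []|].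
  destruct (classic (exists L, P L a)) as [[L HL]|Hn].
  - exists (Nat.max J L). intros b [<-|Hin] Hb; [exists L; split; auto; lia|].
    destruct (HJ b Hin Hb) as [L' [? ?]]. exists L'; split; auto; lia.
  - exists J. intros b [<-|Hin] Hb; [tauto|]. auto.
Qed.

Lemma ln_3_subadditive (B : nat -> nat) : (forall k, (1 <= B k)%nat) ->
  (forall x y, (B (x + y) <= B x * (B y + 2))%nat) ->
  forall x y : nat, ln (3 * INR (B (x + y)%nat)) <= ln (3 * INR (B x)) + ln (3 * INR (B y)).
Proof.
  intros HB1 HB x y. assert (Bx := HB1 x). assert (By := HB1 y).
  assert (H3 : (B (x + y) <= 3 * B x * B y)%nat) by (specialize (HB x y); nia).
  apply le_INR in H3. rewrite !mult_INR in H3. replace (INR 3) with 3 in H3 by (simpl; ring).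
  assert (1 <= INR (B x)) by (apply (le_INR 1); auto).
  assert (1 <= INR (B y)) by (apply (le_INR 1); auto).
  assert (1 <= INR (B (x + y)%nat)) by (apply (le_INR 1); auto).
  rewrite <- ln_mult by lra. apply ln_le; nra.
Qed.

Lemma ln_close (N C B : nat) (m J : nat) : (1 <= m)%nat -> (1 <= N)%nat ->
  (N <= C)%nat -> (C <= 3 * N)%nat -> (C <= B)%nat -> (B <= C * m ^ J)%nat ->
  Rabs (ln (INR N) - ln (3 * INR B)) <= 2 * ln 3 + INR J * ln (INR m).
Proof.
  intros Hm HN H1 H2 H3 H4.
  assert (R1 : 1 <= INR N) by (apply (le_INR 1); auto).
  assert (R2 : INR N <= INR B) by (apply le_INR; lia).
  assert (Hm1 : 1 <= INR m) by (apply (le_INR 1); auto).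
  assert (HmJ : 0 < INR m ^ J) by (apply pow_lt; lra).
  assert (R3 : INR B <= 3 * INR N * INR m ^ J).
  { rewrite <- pow_INR. replace 3 with (INR 3) by (simpl; ring). rewrite <- !mult_INR.
    apply le_INR. nia. }
  assert (Hl3 : 0 < ln 3) by (rewrite <- ln_1; apply ln_increasing; lra).
  assert (HlJ : 0 <= INR J * ln (INR m))
    by (apply Rmult_le_pos; [apply pos_INR|rewrite <- ln_1; apply ln_le; lra]).
  rewrite ln_mult by lra.
  assert (ln (INR N) <= ln (INR B)) by (apply ln_le; lra).
  assert (ln (INR B) <= ln 3 + ln (INR N) + INR J * ln (INR m)).
  { rewrite <- ln_pow, <- !ln_mult by (try apply pow_lt; lra). apply ln_le; lra. }
  apply Rabs_le. split; lra.
Qed.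

Section ZoomClosedFamily.
Variable m : nat.
Hypothesis Hm : (0 < m)%nat.
Variable family : (R -> Prop) -> Prop.
Hypothesis family_open : forall F s, family F -> F s -> 0 < s < 1.
Hypothesis family_zoom : forall F L Y, family F -> (Y < m ^ L)%nat -> family (zoom m F L Y).
Variable members : list (R -> Prop).
Hypothesis family_finite : forall F, family F -> In F members.

Lemma family_unit_interval F : family F -> in_unit_interval F.
Proof. intros HF s h. destruct (family_open F s HF h). lra. Qed.

(** Only finitely many sets are zooms of [F], so every zoom of [F] already occurs at a
    bounded depth [J]. *)
Lemma bounded_zoom_depth F : family F -> exists J, forall L Y, (Y < m ^ L)%nat ->
  exists L' Y', (L' <= J)%nat /\ (Y' < m ^ L')%nat /\ zoom m F L Y = zoom m F L' Y'.
Proof.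
  intros HF.
  destruct (list_bounded_witness
              (fun L G => exists Y, (Y < m ^ L)%nat /\ zoom m F L Y = G) members) as [J HJ].
  exists J. intros L Y HY.
  destruct (HJ (zoom m F L Y)) as [L' [HL' [Y' [HY' E]]]].
  - apply family_finite, family_zoom; auto.
  - eauto.
  - exists L', Y'. auto.
Qed.

Definition zoom_cell_max (F : R -> Prop) (J k : nat) : nat :=
  max_below (S J) (fun L => max_below (m ^ L) (fun Y => cell_count m k (zoom m F L Y))).

Lemma cell_count_le_zoom_cell_max F J k : family F ->
  (cell_count m k F <= zoom_cell_max F J k)%nat.
Proof.
  intros HF. unfold zoom_cell_max.
  eapply Nat.le_trans; [|apply (max_below_ge _ _ 0); lia].
  eapply Nat.le_trans; [|apply (max_below_ge _ _ 0); simpl; lia].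
  cbv beta. rewrite zoom_0; auto. intros s. now apply family_open.
Qed.

Lemma zoom_cell_max_le F J k : (zoom_cell_max F J k <= cell_count m k F * m ^ J)%nat.
Proof.
  apply max_below_le. intros L HL. apply max_below_le. intros Y HY.
  eapply Nat.le_trans; [apply (cell_count_zoom_le m Hm); auto|].
  rewrite Nat.add_comm. eapply Nat.le_trans; [apply (cell_count_refine m Hm)|].
  apply Nat.mul_le_mono_l, Nat.pow_le_mono_r; lia.
Qed.

(** Splitting at level [L] a zoom of depth [<= J] produces zooms of depth [<= J + L], which
    are again zooms of depth [<= J]. *)
Lemma zoom_cell_max_submult F J : (forall L Y, (Y < m ^ L)%nat ->
    exists L' Y', (L' <= J)%nat /\ (Y' < m ^ L')%nat /\ zoom m F L Y = zoom m F L' Y') ->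
  forall L k, (zoom_cell_max F J (L + k) <= zoom_cell_max F J L * (zoom_cell_max F J k + 2))%nat.
Proof.
  intros HJ L k. apply max_below_le. intros L1 HL1. apply max_below_le. intros Y1 HY1.
  eapply Nat.le_trans.
  - apply (cell_count_split m Hm L k (zoom m F L1 Y1) (zoom_cell_max F J k)).
    intros Y HY. rewrite zoom_comp by auto.
    assert (HY' : (Y1 * m ^ L + Y < m ^ (L1 + L))%nat) by (rewrite Nat.pow_add_r; nia).
    destruct (HJ _ _ HY') as [L' [Y' [HL' [HY'' ->]]]].
    unfold zoom_cell_max. eapply Nat.le_trans; [|apply (max_below_ge _ _ L'); lia].
    apply (max_below_ge (m ^ L') (fun Y => cell_count m k (zoom m F L' Y))); auto.
  - apply Nat.mul_le_mono_r. unfold zoom_cell_max.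
    eapply Nat.le_trans; [|apply (max_below_ge _ _ L1); lia].
    apply (max_below_ge (m ^ L1) (fun Y => cell_count m L (zoom m F L1 Y))); auto.
Qed.

Lemma log_Nk_limit F : (2 <= m)%nat -> family F -> (exists s, F s) ->
  exists d, 0 <= d /\ is_lim_seq (fun k => ln (INR (Nk m k F)) / (INR k * ln (INR m))) d.
Proof.
  intros Hm2 HF Hne. destruct (bounded_zoom_depth F HF) as [J HJ].
  assert (HF01 := family_unit_interval F HF).
  set (B := zoom_cell_max F J).
  assert (HC1 : forall k, (1 <= cell_count m k F)%nat) by (intros; apply cell_count_pos; auto).
  assert (HCB : forall k, (cell_count m k F <= B k)%nat)
    by (intros; apply cell_count_le_zoom_cell_max; auto).
  assert (HB1 : forall k, (1 <= B k)%nat) by (intros k; specialize (HC1 k); specialize (HCB k); lia).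
  set (u := fun k => ln (3 * INR (B k))).
  assert (Hu0 : forall k, 0 <= u k).
  { intros k. unfold u. rewrite <- ln_1. apply ln_le; [lra|].
    assert (1 <= INR (B k)) by (apply (le_INR 1); auto). lra. }
  destruct (fekete u (ln_3_subadditive B HB1 (zoom_cell_max_submult F J HJ)) Hu0)
    as [lam [Hlam Hlim]].
  assert (Hlm : 0 < ln (INR m))
    by (rewrite <- ln_1; apply ln_increasing; [lra|apply (lt_INR 1); lia]).
  assert (Hlim2 : is_lim_seq (fun k => ln (INR (Nk m k F)) / INR k) lam).
  { apply (is_lim_seq_close (fun k => u k / INR k) _ lam (2 * ln 3 + INR J * ln (INR m)) Hlim).
    intros k Hk.
    assert (Hk0 : 0 < INR k) by (apply lt_0_INR; lia).
    assert (HN := Nk_le_cell_count m Hm k F HF01). assert (HC := cell_count_le_3Nk m Hm k F HF01).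
    assert (Hclose := ln_close (Nk m k F) (cell_count m k F) (B k) m J ltac:(lia)
                        ltac:(specialize (HC1 k); lia) HN HC (HCB k) (zoom_cell_max_le F J k)).
    replace (ln (INR (Nk m k F)) / INR k - u k / INR k)
      with ((ln (INR (Nk m k F)) - u k) * / INR k) by (field; lra).
    rewrite Rabs_mult, Rabs_inv, (Rabs_pos_eq (INR k)) by lra.
    apply Rmult_le_compat_r; [left; apply Rinv_0_lt_compat; lra| auto]. }
  exists (lam / ln (INR m)). split; [apply Rmult_le_pos; [lra| left; apply Rinv_0_lt_compat; lra]|].
  assert (H := is_lim_seq_scal_r _ (/ ln (INR m)) lam Hlim2). simpl in H.
  eapply is_lim_seq_ext; [|apply H]. intros k. unfold Rdiv. rewrite Rinv_mult. ring.
Qed.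

Definition Nk_bounds (F : R -> Prop) (eps c : R) : Prop :=
  forall k, ((exists s, F s) ->
               / c * Rpower (INR m) (INR k * (dimB m F - eps)) <= INR (Nk m k F)) /\
            INR (Nk m k F) <= c * Rpower (INR m) (INR k * (dimB m F + eps)).

Lemma Nk_bounds_weaken F eps c c' : 0 < c -> c <= c' -> Nk_bounds F eps c -> Nk_bounds F eps c'.
Proof.
  intros Hc Hcc HQ k. destruct (HQ k) as [H1 H2]. split.
  - intros Hne. specialize (H1 Hne).
    assert (/ c' <= / c) by (apply Rinv_le_contravar; lra).
    assert (0 < Rpower (INR m) (INR k * (dimB m F - eps))) by apply exp_pos.
    nra.
  - assert (0 < Rpower (INR m) (INR k * (dimB m F + eps))) by apply exp_pos. nra.
Qed.

Lemma family_Nk_bounds F eps : family F -> 0 < eps -> exists c, 0 < c /\ Nk_bounds F eps c.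
Proof.
  intros HF Heps. assert (HF01 := family_unit_interval F HF).
  destruct (classic (exists s, F s)) as [Hne|Hem].
  2:{ exists 1. split; [lra|]. intros k. split; [tauto|].
      rewrite (Nk_empty m Hm); [|intros s hs; apply Hem; eauto].
      assert (0 < Rpower (INR m) (INR k * (dimB m F + eps))) by apply exp_pos. simpl; lra. }
  assert (HN1 : forall k, (1 <= Nk m k F)%nat) by (intros k; now apply Nk_pos).
  assert (HNm : forall k, (Nk m k F <= m ^ k)%nat) by (intros k; now apply Nk_le_pow).
  destruct (Nat.eq_dec m 1) as [E1|E1].
  - exists 1. split; [lra|]. unfold Nk_bounds. intros k.
    assert (Hpow : (m ^ k = 1)%nat) by (rewrite E1; apply Nat.pow_1_l).
    assert (E : Nk m k F = 1%nat) by (specialize (HN1 k); specialize (HNm k); lia).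
    rewrite E, E1, dimB_base1. unfold Rpower. simpl (INR 1). rewrite ln_1, !Rmult_0_r, exp_0.
    split; [intros; lra|lra].
  - destruct (log_Nk_limit F ltac:(lia) HF Hne) as [d [Hd Hl]].
    assert (Ed : dimB m F = d) by (unfold dimB; rewrite (is_lim_seq_unique _ _ Hl); auto).
    destruct (Nk_bounds_of_limit m (fun k => Nk m k F) ltac:(lia) HN1 HNm d Hd Hl eps Heps)
      as [c [Hc Hb]].
    exists c. split; auto. intros k. rewrite Ed. destruct (Hb k). split; auto.
Qed.

Lemma uniform_Nk_bounds eps : 0 < eps ->
  exists c, 0 < c /\ forall F, family F -> Nk_bounds F eps c.
Proof.
  intros Heps.
  assert (Hl : forall l, exists c, 0 < c /\ forall F, family F -> In F l -> Nk_bounds F eps c).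
  { induction l as [|G l [c [Hc Hcl]]]; [exists 1; split; [lra|]; intros F _ []|].
    destruct (classic (family G)) as [HG|HG].
    - destruct (family_Nk_bounds G eps HG Heps) as [cG [HcG HQG]].
      exists (Rmax c cG). split; [apply (Rlt_le_trans _ c); auto; apply Rmax_l|].
      intros F HF [<-|Hin].
      + apply (Nk_bounds_weaken _ _ cG); auto. apply Rmax_r.
      + apply (Nk_bounds_weaken _ _ c); auto. apply Rmax_l.
    - exists c. split; auto. intros F HF [<-|Hin]; [tauto|auto]. }
  destruct (Hl members) as [c [Hc Hcl]]. exists c. split; auto.
Qed.

Lemma log_ratio_shift_close w a b c : 0 < a -> 0 <= b -> 0 < c -> 0 <= w <= a * c ->
  Rabs (w / ((a + b) * c) - w / (a * c)) <= b / a.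
Proof.
  intros Ha Hb Hc Hw.
  replace (w / ((a + b) * c) - w / (a * c)) with (- (w * b / (a * (a + b) * c))) by (field; lra).
  rewrite Rabs_Ropp, Rabs_pos_eq.
  2:{ apply Rmult_le_pos; [nra| left; apply Rinv_0_lt_compat; apply Rmult_lt_0_compat; nra]. }
  rewrite Rle_div_l by (apply Rmult_lt_0_compat; nra).
  replace (b / a * (a * (a + b) * c)) with (b * (a + b) * c) by (field; lra). nra.
Qed.

Lemma dimB_image F L Y : family F -> (Y < m ^ L)%nat -> dimB m (image m L Y F) = dimB m F.
Proof.
  intros HF HY. assert (HF01 := family_unit_interval F HF).
  destruct (Nat.eq_dec m 1) as [E1|E1]; [rewrite E1, !dimB_base1; auto|].
  destruct (classic (exists s, F s)) as [Hne|Hem].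
  2:{ f_equal. apply set_ext. intros s.
      split; [intros [s' [h _]]; exfalso; eauto| intros h; exfalso; eauto]. }
  destruct (log_Nk_limit F ltac:(lia) HF Hne) as [d [Hd Hl]].
  assert (Ed : dimB m F = d) by (unfold dimB; rewrite (is_lim_seq_unique _ _ Hl); auto).
  rewrite Ed. unfold dimB.
  enough (Hl2 : is_lim_seq
                  (fun k => ln (INR (Nk m k (image m L Y F))) / (INR k * ln (INR m))) d)
    by (rewrite (is_lim_seq_unique _ _ Hl2); auto).
  apply (is_lim_seq_incr_n _ L), (is_lim_seq_close _ _ d (INR L) Hl). intros k Hk.
  rewrite Nk_image, plus_INR by auto.
  assert (Hlm : 0 < ln (INR m))
    by (rewrite <- ln_1; apply ln_increasing; [lra|apply (lt_INR 1); lia]).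
  apply log_ratio_shift_close; auto; [apply lt_0_INR; lia|apply pos_INR|split].
  - rewrite <- ln_1. apply ln_le; [lra|]. apply (le_INR 1). apply Nk_pos; auto.
  - rewrite <- ln_pow by (apply (lt_INR 0); lia). apply ln_le; [apply (lt_INR 0), Nk_pos; auto|].
    rewrite <- pow_INR. apply le_INR, Nk_le_pow; auto.
Qed.

End ZoomClosedFamily.

Definition allows (a : bool * bool) (x : R) : Prop :=
  0 <= x <= 1 /\ (x = 0 -> fst a = true) /\ (x = 1 -> snd a = true).

(** [Some (l, r)]: the vertex contributes, with abscissae allowed to be [0] only if [l] and
    [1] only if [r]; [None]: it does not contribute. *)
Definition flag := option (bool * bool).

Definition flag_join (o1 o2 : flag) : flag :=
  match o1, o2 with
  | None, o => o
  | Some a, None => Some a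
  | Some (l1, r1), Some (l2, r2) => Some (orb l1 l2, orb r1 r2)
  end.

Lemma allows_orb l1 r1 l2 r2 x :
  allows (orb l1 l2, orb r1 r2) x <-> allows (l1, r1) x \/ allows (l2, r2) x.
Proof.
  unfold allows; simpl. split.
  - intros [h0 [h1 h2]]. destruct (Req_dec x 0) as [e|e].
    + specialize (h1 e). apply orb_prop in h1.
      destruct h1; [left|right]; repeat split; auto; intros; lra.
    + destruct (Req_dec x 1) as [e'|e'].
      * specialize (h2 e'). apply orb_prop in h2.
        destruct h2; [left|right]; repeat split; auto; intros; lra.
      * left; repeat split; auto; intros; lra.
  - intros [[h0 [h1 h2]]|[h0 [h1 h2]]]; (split; [auto| split; intros e]);
      try (rewrite (h1 e)); try (rewrite (h2 e)); simpl; auto using orb_true_r.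
Qed.

Lemma flag_join_allows o1 o2 x :
  (exists c, flag_join o1 o2 = Some c /\ allows c x) <->
  (exists a, o1 = Some a /\ allows a x) \/ (exists b, o2 = Some b /\ allows b x).
Proof.
  destruct o1 as [[l1 r1]|]; destruct o2 as [[l2 r2]|]; simpl; split.
  - intros [c [Ec Ic]]. injection Ec as <-. apply allows_orb in Ic. destruct Ic; eauto.
  - intros [[a [Ea Ia]]|[b [Eb Ib]]]; [injection Ea as <-|injection Eb as <-];
      eexists; split; [reflexivity| apply allows_orb; auto|reflexivity| apply allows_orb; auto].
  - intros [c [Ec Ic]]. eauto.
  - intros [[a [Ea Ia]]|[b [Eb Ib]]]; [eauto|discriminate].
  - intros [c [Ec Ic]]. eauto.
  - intros [[a [Ea Ia]]|[b [Eb Ib]]]; [discriminate|eauto].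
  - intros [c [Ec Ic]]; discriminate.
  - intros [[a [Ea Ia]]|[b [Eb Ib]]]; discriminate.
Qed.

Lemma allows_open x : allows (false, false) x <-> 0 < x < 1.
Proof.
  unfold allows; simpl. split.
  - intros [[h0 h1] [h2 h3]]. split.
    + destruct h0 as [h0|h0]; auto. symmetry in h0. specialize (h2 h0). discriminate.
    + destruct h1 as [h1|h1]; auto. specialize (h3 h1). discriminate.
  - intros [h0 h1]. repeat split; try lra; intros; lra.
Qed.

(** After the map [x |-> (x + xe) / n], an endpoint of [[0, 1]] is reached only from the
    corresponding endpoint of the first or the last column; interior columns allow both. *)
Definition column_mode (n : nat) (a : bool * bool) (xe : nat) : bool * bool :=
  (if Nat.eqb xe 0 then fst a else true, if Nat.eqb xe (n - 1) then snd a else true).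

Lemma allows_column n a xe x : (xe < n)%nat -> 0 <= x <= 1 ->
  (allows a ((x + INR xe) / INR n) <-> allows (column_mode n a xe) x).
Proof.
  intros Hxe Hx.
  assert (HN : 0 < INR n) by (apply lt_0_INR; lia).
  assert (Hxe1 := INR_le_pred xe n Hxe). assert (Hxe0 : 0 <= INR xe) by apply pos_INR.
  set (y := (x + INR xe) / INR n).
  assert (Ey : y * INR n = x + INR xe) by (unfold y; field; lra).
  assert (Hy : 0 <= y <= 1).
  { unfold y. split; [apply Rmult_le_pos; [lra| left; apply Rinv_0_lt_compat; lra]|].
    rewrite Rle_div_l by lra. lra. }
  assert (E0 : y = 0 <-> x = 0 /\ xe = 0%nat).
  { split.
    - intros h. rewrite h in Ey. split; [lra|]. apply INR_eq. simpl. lra.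
    - intros [-> ->]. simpl in Ey. nra. }
  assert (E1 : y = 1 <-> x = 1 /\ xe = (n - 1)%nat).
  { split.
    - intros h. rewrite h in Ey. split; [lra|]. apply INR_eq. rewrite minus_INR by lia. simpl. lra.
    - intros [-> ->]. rewrite minus_INR in Ey by lia. simpl in Ey.
      apply (Rmult_eq_reg_r (INR n)); lra. }
  fold y. unfold allows, column_mode.
  destruct (Nat.eqb_spec xe 0); destruct (Nat.eqb_spec xe (n - 1)); simpl;
    split; intros [h1 [h2 h3]]; repeat split; try lra; intros; try reflexivity; tauto.
Qed.

Fixpoint digits_index (m : nat) (y : list nat) : nat :=
  match y with nil => 0%nat | d :: y' => (d * m ^ length y' + digits_index m y')%nat end.

Lemma digits_index_lt m y : (forall d, In d y -> (d < m)%nat) ->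
  (digits_index m y < m ^ length y)%nat.
Proof.
  induction y as [|d y IH]; intros H; simpl; [lia|].
  assert (d < m)%nat by (apply H; left; auto).
  assert (digits_index m y < m ^ length y)%nat by (apply IH; intros; apply H; right; auto). nia.
Qed.

Lemma adic_digits_index m y : (0 < m)%nat ->
  adic m y = INR (digits_index m y) / INR m ^ length y.
Proof.
  intros Hm. assert (HM : 0 < INR m) by (apply lt_0_INR; lia).
  induction y as [|d y IH]; simpl; [field|].
  rewrite IH, plus_INR, mult_INR, pow_INR.
  assert (0 < INR m ^ length y) by (apply pow_lt; lra). field; lra.
Qed.

Lemma I_y_cyl m y u : (0 < m)%nat ->
  I_y m y u <-> exists u', 0 < u' < 1 /\ u = cyl m (length y) (digits_index m y) u'.
Proof.
  intros Hm. assert (HM := mpow_pos m Hm (length y)).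
  unfold I_y, cyl. rewrite adic_digits_index by auto. split.
  - intros [h1 h2]. exists (u * INR m ^ length y - INR (digits_index m y)). split.
    + rewrite Rlt_div_l in h1 by auto.
      replace (INR (digits_index m y) / INR m ^ length y + / INR m ^ length y)
        with ((INR (digits_index m y) + 1) / INR m ^ length y) in h2 by (field; lra).
      rewrite <- Rlt_div_r in h2 by auto. lra.
    + field. lra.
  - intros [u' [[h1 h2] ->]].
    replace (INR (digits_index m y) / INR m ^ length y + / INR m ^ length y)
      with ((INR (digits_index m y) + 1) / INR m ^ length y) by (field; lra).
    split; apply Rmult_lt_compat_r; try apply Rinv_0_lt_compat; auto; lra.
Qed.

Section SelfAffine.
Variables (V E : Type) (i t : E -> V) (n m : nat) (xl yl : E -> nat).
Variable X : V -> R * R -> Prop.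
Variables (lV : list V) (lE : list E).
Hypothesis HlV : forall v, In v lV.
Hypothesis HlE : forall e, In e lE.
Hypothesis Hm : (0 < m)%nat.
Hypothesis Hxl : forall e, (xl e < n)%nat.
Hypothesis Hyl : forall e, (yl e < m)%nat.
Hypothesis HXsq : forall v p, X v p -> in_unit_square p.
Hypothesis HXeq : forall v p, X v p <->
  exists e, i e = v /\ exists q, X (t e) q /\ p = psi_e n m (xl e) (yl e) q.

Definition slice (g : V -> flag) (s : R) : Prop :=
  exists v a p, g v = Some a /\ X v p /\ allows a (fst p) /\ 0 < snd p < 1 /\ snd p = s.

Lemma slice_open g s : slice g s -> 0 < s < 1.
Proof. intros [v [a [p [_ [_ [_ [h e]]]]]]]. subst; auto. Qed.

Definition digit_step_from (g : V -> flag) (d : nat) (v' : V) (l : list E) : flag :=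
  fold_right (fun e acc =>
    if excluded_middle_informative (t e = v' /\ yl e = d) then
      match g (i e) with
      | Some a => flag_join (Some (column_mode n a (xl e))) acc
      | None => acc
      end
    else acc) None l.

Definition digit_step (g : V -> flag) (d : nat) (v' : V) : flag := digit_step_from g d v' lE.

Lemma digit_step_from_allows g d v' x l :
  (exists c, digit_step_from g d v' l = Some c /\ allows c x) <->
  exists e a, In e l /\ t e = v' /\ yl e = d /\ g (i e) = Some a /\
              allows (column_mode n a (xl e)) x.
Proof.
  induction l as [|e l IH].
  - simpl. split; [intros [c [h _]]; discriminate| intros [e [a [[] _]]]].
  - unfold digit_step_from; cbn [fold_right]; fold (digit_step_from g d v' l).
    destruct (excluded_middle_informative (t e = v' /\ yl e = d)) as [[Ht Hy]|Hn];
      [destruct (g (i e)) as [a|] eqn:Hg|]; rewrite ?flag_join_allows, IH; split.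
    + intros [[a0 [Ea Ia]]|[e' [a' [Hin R]]]].
      * injection Ea as <-. exists e, a. split; [left; auto|]. tauto.
      * exists e', a'. split; [right; auto|]. tauto.
    + intros [e' [a' [[<-|Hin] [h1 [h2 [h3 h4]]]]]].
      * left. rewrite Hg in h3. injection h3 as <-. eauto.
      * right. exists e', a'. split; [auto|]. tauto.
    + intros [e' [a' [Hin R]]]. exists e', a'. split; [right; auto|]. tauto.
    + intros [e' [a' [[<-|Hin] [h1 [h2 [h3 h4]]]]]]; [congruence|].
      exists e', a'. split; [auto|]. tauto.
    + intros [e' [a' [Hin R]]]. exists e', a'. split; [right; auto|]. tauto.
    + intros [e' [a' [[<-|Hin] [h1 [h2 [h3 h4]]]]]]; [tauto|].
      exists e', a'. split; [auto|]. tauto.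
Qed.

Lemma digit_of_height (y d : nat) (q s : R) : 0 <= q <= 1 -> 0 < s < 1 ->
  (q + INR y) / INR m = (s + INR d) / INR m -> y = d /\ q = s.
Proof.
  intros Hq Hs H. assert (HM : 0 < INR m) by (apply lt_0_INR; lia).
  apply (Rmult_eq_compat_r (INR m)) in H. unfold Rdiv in H.
  rewrite !Rmult_assoc, Rinv_l, !Rmult_1_r in H by lra.
  assert (y = d) by (apply INR_close_eq; lra). subst. split; auto. lra.
Qed.

Lemma slice_digit_step g d s : (d < m)%nat -> 0 < s < 1 ->
  (slice g ((s + INR d) / INR m) <-> slice (digit_step g d) s).
Proof.
  intros Hd Hs. assert (HM : 0 < INR m) by (apply lt_0_INR; lia).
  split.
  - intros [v [a [p [Hg [Xp [Ia [_ Hps]]]]]]].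
    destruct (proj1 (HXeq v p) Xp) as [e [Hie [q [Xq ->]]]].
    destruct (HXsq _ _ Xq) as [Hq1 Hq2].
    destruct (digit_of_height (yl e) d (snd q) s Hq2 Hs Hps) as [Hye Eqs].
    destruct (proj2 (digit_step_from_allows g d (t e) (fst q) lE)) as [c [Hc Ic]].
    { exists e, a. split; [auto|]. split; [auto|]. split; [auto|]. split; [congruence|].
      now apply allows_column. }
    exists (t e), c, q. split; [auto|]. split; [auto|]. split; [auto|]. rewrite Eqs. auto.
  - intros [v' [c [q [Hst [Xq [Ic [Hq01 Hqs]]]]]]].
    destruct (HXsq _ _ Xq) as [Hq1 Hq2].
    destruct (proj1 (digit_step_from_allows g d v' (fst q) lE) (ex_intro _ c (conj Hst Ic)))
      as [e [a [_ [Ht [Hy [Hg Ia]]]]]].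
    assert (0 <= INR (yl e)) by apply pos_INR. assert (H1 := INR_le_pred _ _ Hd).
    exists (i e), a, (psi_e n m (xl e) (yl e) q). unfold psi_e at 2 3 4; simpl.
    split; [auto|]. split; [|split; [|split; [split|]]].
    + apply HXeq. exists e; split; auto. exists q; split; auto. subst v'; auto.
    + apply allows_column; auto.
    + apply Rdiv_lt_0_compat; lra.
    + rewrite Rlt_div_l by lra. subst d. lra.
    + now rewrite Hy, Hqs.
Qed.

Lemma zoom_slice_digit g d : (d < m)%nat -> zoom m (slice g) 1 d = slice (digit_step g d).
Proof.
  intros Hd. apply set_ext. intros s. unfold zoom, cyl. rewrite pow_1. split.
  - intros [Hs h]. apply slice_digit_step; auto.
  - intros h. assert (Hs := slice_open _ _ h). split; auto. apply slice_digit_step; auto.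
Qed.

Fixpoint digit_steps (g : V -> flag) (L Y : nat) : V -> flag :=
  match L with
  | O => g
  | S L' => digit_step (digit_steps g L' (Y / m)) (Y mod m)
  end.

Lemma zoom_slice L : forall g Y, (Y < m ^ L)%nat ->
  zoom m (slice g) L Y = slice (digit_steps g L Y).
Proof.
  induction L as [|L IH]; intros g Y HY.
  - simpl in HY. replace Y with 0%nat by lia. apply zoom_0, slice_open.
  - assert (HY1 : (Y / m < m ^ L)%nat)
      by (apply Nat.Div0.div_lt_upper_bound; simpl in HY; lia).
    assert (HY2 : (Y mod m < m)%nat) by (apply Nat.mod_upper_bound; lia).
    simpl digit_steps. rewrite <- zoom_slice_digit, <- IH by auto.
    rewrite (zoom_comp m Hm) by (simpl; lia).
    replace (L + 1)%nat with (S L) by lia. f_equal.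
    rewrite Nat.pow_1_r, Nat.mul_comm. apply Nat.div_mod_eq.
Qed.

Definition all_flags : list flag :=
  None :: Some (true, true) :: Some (true, false) :: Some (false, true) :: Some (false, false) :: nil.

Lemma in_all_flags a : In a all_flags.
Proof. destruct a as [[[|] [|]]|]; simpl; tauto. Qed.

Fixpoint flag_tuples (k : nat) : list (list flag) :=
  match k with
  | O => nil :: nil
  | S k' => flat_map (fun l => map (fun a => a :: l) all_flags) (flag_tuples k')
  end.

Lemma in_flag_tuples l : In l (flag_tuples (length l)).
Proof.
  induction l as [|a l IH]; [simpl; auto|]. cbn [length flag_tuples].
  apply in_flat_map. exists l. split; auto. apply (in_map (fun a0 => a0 :: l)), in_all_flags.
Qed.

(** Every flag assignment is of this form, which bounds the number of slices. *)
Definition flag_of_tuple (l : list flag) (v : V) : flag :=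
  nth (epsilon (inhabits 0%nat) (fun k => nth_error lV k = Some v)) l None.

Lemma flag_of_tuple_map g v : flag_of_tuple (map g lV) v = g v.
Proof.
  unfold flag_of_tuple. assert (H : exists k, nth_error lV k = Some v) by apply In_nth_error, HlV.
  assert (Hk := epsilon_spec (inhabits 0%nat) _ H).
  apply (map_nth_error g) in Hk. apply nth_error_nth. auto.
Qed.

Definition is_slice (F : R -> Prop) : Prop := exists g, F = slice g.

Lemma is_slice_finite F : is_slice F ->
  In F (map (fun l => slice (flag_of_tuple l)) (flag_tuples (length lV))).
Proof.
  intros [g ->]. replace (slice g) with (slice (flag_of_tuple (map g lV))).
  - apply (in_map (fun l => slice (flag_of_tuple l))).
    rewrite <- (length_map g lV). apply in_flag_tuples.
  - f_equal. apply functional_extensionality. apply flag_of_tuple_map.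
Qed.

Lemma is_slice_zoom F L Y : is_slice F -> (Y < m ^ L)%nat -> is_slice (zoom m F L Y).
Proof. intros [g ->] HY. exists (digit_steps g L Y). now apply zoom_slice. Qed.

Lemma is_slice_open F s : is_slice F -> F s -> 0 < s < 1.
Proof. intros [g ->]. apply slice_open. Qed.

(** The vertices reached from [h] along some word with the same labels as [w]. *)
Fixpoint label_reach (h : V -> Prop) (w : list E) : V -> Prop :=
  match w with
  | nil => h
  | e :: w' =>
      label_reach (fun v' => exists e', h (i e') /\ t e' = v' /\ xl e' = xl e /\ yl e' = yl e) w'
  end.

Lemma psi_e_open e q : open_square q -> open_square (psi_e n m (xl e) (yl e) q).
Proof.
  intros [[h1 h2] [h3 h4]]. unfold psi_e, open_square; simpl.
  assert (Hx := INR_le_pred _ _ (Hxl e)). assert (Hy := INR_le_pred _ _ (Hyl e)).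
  assert (0 <= INR (xl e)) by apply pos_INR. assert (0 <= INR (yl e)) by apply pos_INR.
  repeat split; try apply Rdiv_lt_0_compat; try rewrite Rlt_div_l; lra.
Qed.

Lemma psi_w_cons e w q :
  psi_w n m xl yl (e :: w) q = psi_e n m (xl e) (yl e) (psi_w n m xl yl w q).
Proof. reflexivity. Qed.

Lemma psi_w_open w q : open_square q -> open_square (psi_w n m xl yl w q).
Proof. induction w; intros h; [auto|]. rewrite psi_w_cons. apply psi_e_open; auto. Qed.

Lemma psi_e_inj e e' r q : open_square r -> in_unit_square q ->
  psi_e n m (xl e) (yl e) r = psi_e n m (xl e') (yl e') q ->
  xl e = xl e' /\ yl e = yl e' /\ r = q.
Proof.
  intros [Hr1 Hr2] [Hq1 Hq2] H. unfold psi_e in H. injection H as H1 H2.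
  assert (HN : 0 < INR n) by (apply lt_0_INR; specialize (Hxl e); lia).
  assert (HM : 0 < INR m) by (apply lt_0_INR; lia).
  apply (Rmult_eq_compat_r (INR n)) in H1. apply (Rmult_eq_compat_r (INR m)) in H2.
  unfold Rdiv in H1, H2. rewrite !Rmult_assoc, Rinv_l, !Rmult_1_r in H1, H2 by lra.
  assert (X1 : xl e = xl e') by (apply INR_close_eq; lra).
  assert (Y1 : yl e = yl e') by (apply INR_close_eq; lra).
  rewrite X1 in H1. rewrite Y1 in H2. split; auto. split; auto.
  destruct r, q; simpl in *. f_equal; lra.
Qed.

Lemma psi_w_point_iff w : forall h p,
  (exists v0, h v0 /\ X v0 p /\ exists q, open_square q /\ p = psi_w n m xl yl w q) <->
  (exists q, open_square q /\ (exists v', label_reach h w v' /\ X v' q) /\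
             p = psi_w n m xl yl w q).
Proof.
  induction w as [|e w IH]; intros h p; cbn [label_reach]; [split|].
  { intros [v0 [hv [Xp [q [Hq ->]]]]]. exists q; eauto. }
  { intros [q [Hq [[v' [hv Xq]] ->]]]. exists v'; eauto. }
  set (h' := fun v' => exists e', h (i e') /\ t e' = v' /\ xl e' = xl e /\ yl e' = yl e).
  split.
  - intros [v0 [hv [Xp [q [Hq Hp]]]]]. rewrite psi_w_cons in Hp.
    destruct (proj1 (HXeq v0 p) Xp) as [e' [Hie [q' [Xq' Ep]]]].
    rewrite Hp in Ep.
    destruct (psi_e_inj e e' _ q' (psi_w_open w q Hq) (HXsq _ _ Xq') Ep) as [ex [ey Er]].
    destruct (proj1 (IH h' (psi_w n m xl yl w q))) as [q2 [Hq2 [Hv2 E2]]].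
    { exists (t e'). split; [exists e'; subst v0; repeat split; auto|].
      split; [rewrite Er; auto|]. exists q; auto. }
    exists q2. split; auto. split; auto. now rewrite Hp, psi_w_cons, <- E2.
  - intros [q [Hq [Hv Hp]]]. rewrite psi_w_cons in Hp.
    destruct (proj2 (IH h' (psi_w n m xl yl w q))) as [v1 [[e' [h1 [h2 [h3 h4]]]] [Xr _]]].
    { exists q; auto. }
    exists (i e'). split; auto. split.
    + apply HXeq. exists e'. split; auto. exists (psi_w n m xl yl w q).
      split; [subst v1; auto|]. now rewrite Hp, h3, h4.
    + exists q. split; auto.
Qed.

Lemma snd_psi_w w q : snd (psi_w n m xl yl w q) = phi_w m yl w (snd q).
Proof. induction w as [|e w IH]; simpl; auto. rewrite <- IH. reflexivity. Qed.

Lemma phi_w_cyl w s : phi_w m yl w s = cyl m (length w) (digits_index m (map yl w)) s.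
Proof.
  induction w as [|e w IH]; [unfold cyl; simpl; field|].
  change (phi_w m yl (e :: w) s) with (phi_e m (yl e) (phi_w m yl w s)).
  rewrite IH. cbn [length map digits_index]. rewrite length_map.
  change (S (length w)) with (1 + length w)%nat. rewrite <- cyl_comp by auto.
  unfold phi_e, cyl. rewrite pow_1. reflexivity.
Qed.

Definition word_flag (v : V) (w : list E) (v' : V) : flag :=
  if excluded_middle_informative (label_reach (fun u => u = v) w v')
  then Some (false, false) else None.

Lemma piece_as_image v w : piece n m xl yl (X v) w =
  image m (length w) (digits_index m (map yl w)) (slice (word_flag v w)).
Proof.
  apply set_ext. intros s. unfold piece, image. split.
  - intros [p [Xp [[q [Hq Hpq]] Hps]]].
    destruct (proj1 (psi_w_point_iff w (fun u => u = v) p))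
      as [q' [Hq' [[v' [Hreach Xq']] Ep]]]; [exists v; eauto|].
    exists (snd q'). split.
    + exists v', (false, false), q'. split.
      * unfold word_flag. destruct excluded_middle_informative; tauto.
      * split; auto. split; [apply allows_open; apply Hq'|]. split; [apply Hq'| auto].
    + now rewrite <- Hps, Ep, snd_psi_w, phi_w_cyl.
  - intros [s' [[v' [a [q [Hg [Xq [Ia [Hq01 Hqs]]]]]]] Hs]].
    unfold word_flag in Hg. destruct excluded_middle_informative as [Hreach|]; [|discriminate].
    injection Hg as <-. apply allows_open in Ia.
    assert (Hq : open_square q) by (split; auto).
    destruct (proj2 (psi_w_point_iff w (fun u => u = v) (psi_w n m xl yl w q)))
      as [v0 [-> [Xp _]]]; [exists q; eauto|].
    exists (psi_w n m xl yl w q). split; auto. split; [exists q; auto|].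
    now rewrite snd_psi_w, phi_w_cyl, Hqs.
Qed.

Lemma piece_y_as_image v w y : (forall d, In d y -> (d < m)%nat) ->
  piece_y n m xl yl (X v) w y =
  image m (length w + length y) (digits_index m (map yl w) * m ^ length y + digits_index m y)
    (slice
       (digit_steps (word_flag v w) (length y) (digits_index m y))).
Proof.
  intros Hyd. assert (HY := digits_index_lt m y Hyd).
  apply set_ext. intros s. unfold piece_y. rewrite piece_as_image.
  rewrite <- zoom_slice by auto. unfold image, zoom. split.
  - intros [[s' [Ts' Hs]] [u [Iu Hsu]]]. rewrite phi_w_cyl in Hsu.
    assert (Es : s' = u) by (apply (cyl_inj m Hm (length w) (digits_index m (map yl w))); congruence).
    subst s'. apply I_y_cyl in Iu; auto. destruct Iu as [u' [Hu' ->]].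
    exists u'. split; [split; auto|]. now rewrite Hs, cyl_comp.
  - intros [u' [[Hu' Tu'] Hs]]. rewrite <- cyl_comp in Hs by auto.
    split; exists (cyl m (length y) (digits_index m y) u'); split; auto.
    + apply I_y_cyl; eauto.
    + now rewrite phi_w_cyl.
Qed.

Lemma word_maps_labels w' : forall w, map xl w' = map xl w -> map yl w' = map yl w ->
  (forall q, psi_w n m xl yl w' q = psi_w n m xl yl w q) /\
  (forall s, phi_w m yl w' s = phi_w m yl w s).
Proof.
  induction w' as [|e w' IH]; intros w Hx Hy; destruct w as [|e2 w]; simpl in *;
    try discriminate; [split; auto|].
  injection Hx as Hx1 Hx2. injection Hy as Hy1 Hy2. destruct (IH w Hx2 Hy2) as [H1 H2].
  split; intros; [rewrite H1, Hx1, Hy1| rewrite H2, Hy1]; auto.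
Qed.

Lemma piece_labels v w w' : map xl w' = map xl w -> map yl w' = map yl w ->
  piece n m xl yl (X v) w' = piece n m xl yl (X v) w.
Proof.
  intros Hx Hy. destruct (word_maps_labels w' w Hx Hy) as [H1 _].
  apply set_ext. intros s. unfold piece. split;
    intros [p [Xp [[q [Hq Ep]] Hs]]]; exists p; repeat split; auto; exists q;
    [rewrite <- H1|rewrite H1]; auto.
Qed.

Lemma piece_y_labels v w w' y : map xl w' = map xl w -> map yl w' = map yl w ->
  piece_y n m xl yl (X v) w' y = piece_y n m xl yl (X v) w y.
Proof.
  intros Hx Hy. destruct (word_maps_labels w' w Hx Hy) as [_ H2].
  unfold piece_y. rewrite (piece_labels v w w' Hx Hy).
  apply set_ext. intros s. split; intros [h [u [Iu Ep]]]; split; auto; exists u;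
    [rewrite <- H2|rewrite H2]; auto.
Qed.

Lemma eta_piece v w : word_from i t v w ->
  eta i t n m xl yl X v (map xl w) (map yl w) = dimB m (piece n m xl yl (X v) w).
Proof.
  intros Hw. unfold eta. destruct excluded_middle_informative as [H|H].
  - destruct (constructive_indefinite_description _ H) as [w' [Hw' [Hx Hy]]]. simpl.
    now rewrite (piece_labels v w w' Hx Hy).
  - exfalso. apply H. exists w. repeat split; auto; apply Hw.
Qed.

Lemma theta_piece v w y : word_from i t v w -> y <> nil ->
  theta i t n m xl yl X v (map xl w) (map yl w) y = dimB m (piece_y n m xl yl (X v) w y).
Proof.
  intros Hw Hy. destruct y as [|d y']; [contradiction|]. unfold theta.
  destruct excluded_middle_informative as [H|H].
  - destruct (constructive_indefinite_description _ H) as [w' [Hw' [Hx Hy']]]. simpl.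
    now rewrite (piece_y_labels v w w' (d :: y') Hx Hy').
  - exfalso. apply H. exists w. repeat split; auto; apply Hw.
Qed.

Theorem piece_Nk_bounds : forall eps, 0 < eps ->
  exists c1, 0 < c1 /\
  forall (v : V) (w : list E) (k : nat) (y : list nat),
    word_from i t v w -> (1 <= k)%nat ->
    y <> nil -> (forall d, In d y -> (d < m)%nat) ->
    let F := piece n m xl yl (X v) w in
    let et := eta i t n m xl yl X v (map xl w) (map yl w) in
    let th := theta i t n m xl yl X v (map xl w) (map yl w) y in
    ((exists s, F s) ->
       / c1 * Rpower (INR m) (INR k * (et - eps)) <= INR (Nk m (k + length w) F)) /\
    INR (Nk m (k + length w) F) <= c1 * Rpower (INR m) (INR k * (et + eps)) /\
    ((exists s, piece_y n m xl yl (X v) w y s) ->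
       / c1 * Rpower (INR m) (INR k * (th - eps))
         <= INR (Nk m (k + length w + length y) (piece_y n m xl yl (X v) w y)) /\
       INR (Nk m (k + length w + length y) (piece_y n m xl yl (X v) w y))
         <= c1 * Rpower (INR m) (INR k * (th + eps))).
Proof.
  intros eps Heps.
  destruct (uniform_Nk_bounds m Hm is_slice is_slice_open is_slice_zoom _ is_slice_finite eps Heps)
    as [c [Hc HQ]].
  exists c. split; auto. intros v w k y Hw Hk Hy Hyd. cbv zeta.
  assert (HW := digits_index_lt m (map yl w) ltac:(intros d Hd; apply in_map_iff in Hd;
                                                    destruct Hd as [e [<- _]]; auto)).
  rewrite length_map in HW. assert (HY := digits_index_lt m y Hyd).
  assert (HWY : (digits_index m (map yl w) * m ^ length y + digits_index m y
                 < m ^ (length w + length y))%nat) by (rewrite Nat.pow_add_r; nia).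
  assert (Hsl : forall g, is_slice (slice g)) by (intros g; exists g; auto).
  assert (H01 : forall g, in_unit_interval (slice g))
    by (intros g s Hs; destruct (slice_open g s Hs); lra).
  rewrite eta_piece, theta_piece, !piece_as_image, !piece_y_as_image by auto.
  rewrite !(dimB_image m Hm is_slice is_slice_open is_slice_zoom _ is_slice_finite) by auto.
  rewrite <- Nat.add_assoc, !(Nk_image m Hm) by auto.
  destruct (HQ _ (Hsl (word_flag v w)) k) as [A1 A2].
  destruct (HQ _ (Hsl (digit_steps (word_flag v w) (length y) (digits_index m y))) k) as [B1 B2].
  split; [|split; auto].
  - intros [s [s' [h _]]]. apply A1. eauto.
  - intros [s [s' [h _]]]. split; auto. apply B1. eauto.
Qed.

End SelfAffine.

Theorem lemma2
  (V E : Type) (i t : E -> V)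
  (HVfin : exists lV : list V, forall v, In v lV)
  (HEfin : exists lE : list E, forall e, In e lE)
  (Hout : forall v, exists e, i e = v)
  (n m : nat) (Hm : (0 < m)%nat) (Hnm : (m < n)%nat)
  (xl yl : E -> nat)
  (Hxl : forall e, (xl e < n)%nat) (Hyl : forall e, (yl e < m)%nat)
  (X : V -> R * R -> Prop)
  (HXsq : forall v p, X v p -> in_unit_square p)
  (HXcl : forall v, closed2 (X v))
  (HXne : forall v, exists p, X v p)
  (HXeq : forall v p, X v p <->
            exists e, i e = v /\ exists q, X (t e) q /\ p = psi_e n m (xl e) (yl e) q) :
  forall eps, 0 < eps ->
  exists c1, 0 < c1 /\
  forall (v : V) (w : list E) (k : nat) (y : list nat),
    word_from i t v w -> (1 <= k)%nat ->
    y <> nil -> (forall d, In d y -> (d < m)%nat) ->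
    let F := piece n m xl yl (X v) w in
    let et := eta i t n m xl yl X v (map xl w) (map yl w) in
    let th := theta i t n m xl yl X v (map xl w) (map yl w) y in
    ((exists s, F s) ->
       / c1 * Rpower (INR m) (INR k * (et - eps)) <= INR (Nk m (k + length w) F)) /\
    INR (Nk m (k + length w) F) <= c1 * Rpower (INR m) (INR k * (et + eps)) /\
    ((exists s, piece_y n m xl yl (X v) w y s) ->
       / c1 * Rpower (INR m) (INR k * (th - eps))
         <= INR (Nk m (k + length w + length y) (piece_y n m xl yl (X v) w y)) /\
       INR (Nk m (k + length w + length y) (piece_y n m xl yl (X v) w y))
         <= c1 * Rpower (INR m) (INR k * (th + eps))).
Proof.
  destruct HVfin as [lV HlV], HEfin as [lE HlE].
  exact (piece_Nk_bounds V E i t n m xl yl X lV lE HlV HlE Hm Hxl Hyl HXsq HXeq).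
Qed.
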